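(* Let $Q$ be a quadrangulation with a strong labeling, with edges colored and oriented as induced by the labeling. If $v$ is a white (respectively black) vertex and $uv$ is an edge oriented towards $v$, then the outgoing edge at $v$ having the same color as $uv$ is the next outgoing edge to the right (respectively left) of $uv$, i.e. the first outgoing edge met when rotating around $v$ starting from $uv$ counterclockwise (respectively clockwise).
   Context: A quadrangulation is a simple plane graph with at least four vertices all of whose faces (including the outer face) are bounded by $4$-cycles; it is bipartite, and its vertices are properly colored black and white. An angle is an incidence of a vertex with a face. A strong labeling of $Q$ is a map from the angles of $Q$ to $\{0,1\}$ such that: (G0) the two black vertices on the outer face are named $s_0$ and $s_1$, and all angles at $s_i$ are labeled $i$; (G1) for each vertex $v\notin\{s_0,s_1\}$ the labels around $v$ form one non-empty cyclic interval of $1$s and one non-empty cyclic interval of $0$s; (G2) for each edge, the two labels on the two sides of the edge coincide at one endpoint and differ at the other; (G3) the labels in each bounded face, read cyclically, are $0,0,1,1$, and reading the labels of the outer face in clockwise order starting at $s_0$ they are $0,0,1,1$. The labeling induces a coloring and orientation of the edges: each edge is colored with the common label at the endpoint where its two labels coincide and is oriented towards that endpoint. *)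

(* Plane graphs are represented combinatorially as plane maps
   (rotation systems) on a finite set of darts (half-edges). *)
From mathcomp Require Import all_boot fingroup perm.
Set Implicit Arguments. Unset Strict Implicit. Unset Printing Implicit Defensive.

Section Maps.
Variables (D V : finType).
Variables (sigma alpha : {perm D}) (vert : D -> V).

(* Conventions:
   - [alpha d] is the reverse of dart [d] (same edge, other endpoint);
   - [vert d] is the vertex at the tail of dart [d];
   - [sigma d] is the next dart counterclockwise around [vert d];
   - [phi d := sigma (alpha d)] is the face permutation. *)
Definition phi : {perm D} := (alpha * sigma)%g.

Definition map_rel : rel D := fun x y => (y == sigma x) || (y == alpha x).

Definition same_face (d d' : D) : bool := fconnect phi d d'.

Definition quadrangulation : Prop :=
  [/\ (forall d, alpha (alpha d) = d /\ alpha d != d),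
      (forall d d', (vert d == vert d') = fconnect sigma d d'),
      (forall x : V, exists d, vert d = x) &
      (forall d d', connect map_rel d d')] /\
  [/\
      (* genus 0 (Euler's formula V - E + F = 2) *)
      (#|V| + fcard phi D) * 2 = #|D| + 4,
      (forall d, vert (alpha d) != vert d) /\
      (forall d d', vert d = vert d' -> vert (alpha d) = vert (alpha d') -> d = d'),
      4 <= #|V| &
      (forall d, size (orbit phi d) = 4 /\ uniq (map vert (orbit phi d)))].

Definition proper_coloring (black : V -> bool) : Prop :=
  forall d, black (vert d) != black (vert (alpha d)).

(* The angle (vertex-face incidence) represented by dart [d] is the
   corner at [vert d] between [d] and the next dart [sigma d] counterclockwise;
   it lies in the face of [alpha d] (i.e. of [sigma d]). In a quadrangulation
   this is a bijection between darts and angles. A labeling is a map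
   [lab : D -> bool] (false = 0, true = 1). *)

Definition face_labels (lab : D -> bool) (e : D) : seq bool :=
  [seq lab (alpha x) | x <- orbit phi e].

Definition strong_labeling (black : V -> bool) (o : D) (s0 s1 : V)
    (lab : D -> bool) : Prop :=
  [/\
      [/\ black s0 /\ black s1 /\ s0 != s1,
          (exists d, same_face o d /\ vert d = s0),
          (exists d, same_face o d /\ vert d = s1) &
          (forall d, (vert d = s0 -> lab d = false) /\ (vert d = s1 -> lab d = true))],
      (forall x : V, x != s0 -> x != s1 ->
         exists d, vert d = x /\
           exists k, 0 < k < fingraph.order sigma d /\
             forall i, i < fingraph.order sigma d -> lab (iter i sigma d) = (i < k)),
      (* (G2) the labels on the two sides of an edge coincide at exactly one end;
         the two sides of dart d at vert d are the angles d and sigma^-1 d *)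
      (forall d, (lab d == lab ((sigma^-1)%g d))
                 != (lab (alpha d) == lab ((sigma^-1)%g (alpha d)))),
      (forall e, ~~ same_face o e ->
         exists i, rot i (face_labels lab e) = [:: false; false; true; true]) &
      (* (G3) outer face read clockwise (= along phi^-1) from s0 is 0,0,1,1 *)
      (exists e0, same_face o e0 /\ vert (alpha e0) = s0 /\
         [seq lab (alpha (iter i (phi^-1)%g e0)) | i <- iota 0 4]
           = [:: false; false; true; true])].

(* induced orientation and coloring: the edge of dart [d] is oriented towards
   [vert d] iff its two side labels coincide at [vert d] *)
Definition towards (lab : D -> bool) (d : D) : bool :=
  lab d == lab ((sigma^-1)%g d).

(* color of the edge of [d]: the common label at the endpoint where they coincide *)
Definition ecolor (lab : D -> bool) (d : D) : bool :=
  if towards lab d then lab d else lab (alpha d).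

Definition next_outgoing (lab : D -> bool) (r : {perm D}) (e e' : D) : Prop :=
  exists k, 0 < k /\ e' = iter k r e /\ ~~ towards lab e' /\
    forall j, 0 < j < k -> towards lab (iter j r e).

End Maps.

From Pilot Require Import Defs.
From mathcomp Require Import all_boot fingroup perm zify.

(* The labels around each face read 0011 cyclically, so the equalities between
   consecutive labels along a face alternate. Since vertex colors alternate too,
   the parity "the labels of angle y and of the next angle of its face agree iff
   the vertex of y is white" is preserved when moving to the next angle of a face,
   and by (G2) also when crossing an edge; it holds at the corner of the outer face
   preceding s0, hence everywhere by connectivity. Around a vertex v other than
   s0, s1, (G1) puts the labels in the form 1..10..0, so the outgoing darts are
   exactly the two darts where the label changes; the parity identifies the color
   of the one starting the 1s as black v and that of the other as its negation,
   while an incoming dart inside the 1s (resp. 0s) has color 1 (resp. 0). Which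
   label change comes first counterclockwise or clockwise then gives the claim. *)

Set Implicit Arguments.
Unset Strict Implicit.
Unset Printing Implicit Defensive.

Definition is_0011_rotation (w : seq bool) : bool :=
  w \in [:: [:: false; false; true; true]; [:: false; true; true; false];
            [:: true; true; false; false]; [:: true; false; false; true]].

Lemma is_0011_rotation_of_rot w :
  (exists i, rot i w = [:: false; false; true; true]) -> is_0011_rotation w.
Proof.
case=> i /(canRL (rotK i)) ->.
by case: i => [|[|[|[|i]]]] //; rewrite /rotr subKn.
Qed.

Lemma is_0011_rotation_rot1 w : is_0011_rotation w -> is_0011_rotation (rot 1 w).
Proof. by rewrite /is_0011_rotation !inE => /or4P[] /eqP->. Qed.

Lemma is_0011_rotation_alternate a b c d :
  is_0011_rotation [:: a; b; c; d] -> (a == b) != (b == c).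
Proof. by rewrite /is_0011_rotation !inE => /or4P[] /eqP[-> -> -> _]. Qed.

Lemma iter_permV_iter (T : finType) (s : {perm T}) x t m :
  t <= m -> iter t (s^-1)%g (iter m s x) = iter (m - t) s x.
Proof.
elim: t m => [|t IHt] m tm; first by rewrite subn0.
by rewrite iterS IHt 1?ltnW // -(subnSK tm) iterS permK.
Qed.

Section StrongLabeling.

Variables (D V : finType) (sigma alpha : {perm D}) (vert : D -> V).
Variables (black : V -> bool) (o : D) (s0 s1 : V) (lab : D -> bool).
Hypothesis HQ : quadrangulation sigma alpha vert.
Hypothesis Hcol : proper_coloring alpha vert black.
Hypothesis HL : strong_labeling sigma alpha vert black o s0 s1 lab.

Local Notation phi := (phi sigma alpha).
Local Notation towards := (towards sigma lab).
Local Notation ecolor := (ecolor sigma alpha lab).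
Local Notation face_labels := (face_labels sigma alpha lab).

Lemma alphaK : involutive alpha.
Proof. by case: HQ => [[Halpha _ _ _] _] d; case: (Halpha d). Qed.

Lemma vert_sigma z : vert (sigma z) = vert z.
Proof. by case: HQ => [[_ Hvert _ _] _]; apply/esym/eqP; rewrite Hvert fconnect1. Qed.

Lemma vert_sigmaV z : vert ((sigma^-1)%g z) = vert z.
Proof. by rewrite -{2}(permKV sigma z) vert_sigma. Qed.

Lemma phiE z : phi z = sigma (alpha z).
Proof. by rewrite /phi permM. Qed.

Lemma iter_phi4 z : iter 4 phi z = z.
Proof.
case: HQ => [_ [_ _ _ Hface]].
have <- : fingraph.order phi z = 4 by rewrite -size_orbit; case: (Hface z).
by rewrite iter_order //; apply: perm_inj.
Qed.

(* Angle [y] lies in the face of [sigma y]; walking along that face, the next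
   angle is the one at the other end of the edge of [sigma y]. *)
Definition face_next (y : D) : D := alpha (sigma y).

Definition face_word (y : D) : seq bool := [seq lab (iter i face_next y) | i <- iota 0 4].

Lemma alpha_iter_phi j z : alpha (iter j phi z) = iter j face_next (alpha z).
Proof. by elim: j => //= j <-; rewrite phiE. Qed.

Lemma face_next4 y : face_next (face_next (face_next (face_next y))) = y.
Proof. by have := alpha_iter_phi 4 (alpha y); rewrite iter_phi4 alphaK. Qed.

Lemma face_word_alpha z :
  face_word (alpha z) = [seq lab (alpha (iter i phi z)) | i <- iota 0 4].
Proof. by apply: eq_map => i; rewrite alpha_iter_phi. Qed.

Lemma face_labelsE z : face_labels z = face_word (alpha z).
Proof.
case: HQ => [_ [_ _ _ Hface]].
by rewrite face_word_alpha /face_labels /orbit -size_orbit (proj1 (Hface z)).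
Qed.

Lemma face_word_next y : face_word (face_next y) = rot 1 (face_word y).
Proof. by rewrite /face_word /= face_next4. Qed.

Lemma face_word_0011 y : is_0011_rotation (face_word y).
Proof.
case: HL => [_ _ _ Hbounded [e0 [Hoe0 [_ Houter]]]].
have [Hout|Hin] := boolP (same_face sigma alpha o (alpha y)); last first.
  by apply: is_0011_rotation_of_rot; rewrite -[y]alphaK -face_labelsE; apply: Hbounded.
(* (G3) reads the outer face along [phi^-1]; from [z0] the same word is read along [phi]. *)
pose z0 := iter 3 (phi^-1)%g e0.
have Hz0 : is_0011_rotation (face_word (alpha z0)).
  by move: Houter; rewrite face_word_alpha /z0 /= !permKV => -[-> -> -> ->].
have : fconnect phi z0 (alpha y).
  apply: connect_trans Hout; rewrite fconnect_sym; last exact: perm_inj.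
  apply: connect_trans Hoe0 _.
  by rewrite /z0 -{2}(iter_phi4 e0) /= !permK fconnect1.
move=> /iter_findex Hy; rewrite -[y]alphaK -Hy alpha_iter_phi.
by elim: (findex _ _ _) => //= j IHj; rewrite face_word_next; apply: is_0011_rotation_rot1.
Qed.

Lemma black_face_next y : black (vert (face_next y)) = ~~ black (vert y).
Proof. by have := Hcol (sigma y); rewrite vert_sigma /face_next; case: black; case: black. Qed.

Lemma face_label_eq_alternate y :
  (lab y == lab (face_next y)) != (lab (face_next y) == lab (face_next (face_next y))).
Proof. exact: is_0011_rotation_alternate (face_word_0011 y). Qed.

Definition agrees_iff_white (y : D) : bool :=
  (lab y == lab (face_next y)) == ~~ black (vert y).

Lemma agrees_iff_white_face_next y : agrees_iff_white (face_next y) = agrees_iff_white y.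
Proof.
have := face_label_eq_alternate y; rewrite /agrees_iff_white black_face_next.
by case: (lab y); case: (lab (face_next y)); case: (lab (face_next _)); case: black.
Qed.

Lemma agrees_iff_white_flip y :
  agrees_iff_white ((sigma^-1)%g (alpha (sigma y))) = agrees_iff_white y.
Proof.
case: HL => [_ _ HG2 _ _]; have := HG2 (sigma y); have := black_face_next y.
rewrite /agrees_iff_white /face_next permKV alphaK vert_sigmaV permK => ->.
by case: (lab y); case: (lab (sigma y)); case: (lab (alpha _)); case: (lab _); case: black.
Qed.

Lemma agrees_iff_white_sigmaV w : agrees_iff_white ((sigma^-1)%g w) = agrees_iff_white w.
Proof.
have := agrees_iff_white_flip ((sigma^-1)%g (alpha w)).
have := agrees_iff_white_face_next ((sigma^-1)%g (alpha w)).
by rewrite /face_next permKV alphaK => -> ->.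
Qed.

Lemma agrees_iff_white_alpha w : agrees_iff_white (alpha w) = agrees_iff_white w.
Proof.
have := agrees_iff_white_face_next ((sigma^-1)%g w).
by rewrite /face_next permKV => ->; apply: agrees_iff_white_sigmaV.
Qed.

Lemma agrees_iff_whiteT y : agrees_iff_white y.
Proof.
case: HQ => [[_ _ _ Hconn] _].
case: HL => [[[Hs0 _] _ _ _] _ _ _ [e0 [_ [Hve0 Houter]]]].
have Hclosed : closed (map_rel sigma alpha) agrees_iff_white.
  move=> x z /orP[] /eqP ->; rewrite /in_mem /=.
    by rewrite -(agrees_iff_white_sigmaV (sigma x)) permK.
  by rewrite agrees_iff_white_alpha.
pose y0 := alpha ((phi^-1)%g e0).
have y0_next : face_next y0 = alpha e0 by rewrite /face_next /y0 -phiE permKV.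
suff Hy0 : agrees_iff_white y0.
  by have := closed_connect Hclosed (Hconn y0 y); rewrite /in_mem /= Hy0 => <-.
move: Houter => /= [Hlab_e0 Hlab_y0 _]; rewrite /agrees_iff_white y0_next.
rewrite -/y0 in Hlab_y0.
by rewrite Hlab_e0 Hlab_y0 -black_face_next y0_next Hve0 Hs0.
Qed.

Lemma label_face_next_eq y : (lab y == lab (face_next y)) = ~~ black (vert y).
Proof. exact: eqP (agrees_iff_whiteT y). Qed.

Lemma ecolor_outgoing z : ~~ towards z -> ecolor z = (lab z == black (vert z)).
Proof.
rewrite /ecolor /Defs.towards => /negbTE Hz; rewrite Hz.
move: Hz; have := label_face_next_eq ((sigma^-1)%g z).
rewrite /face_next permKV vert_sigmaV.
by case: (lab z); case: (lab (alpha z)); case: (lab _); case: black.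
Qed.

Lemma towards_at_poles z : vert z = s0 \/ vert z = s1 -> towards z.
Proof.
case: HL => [[_ _ _ Hpoles] _ _ _ _].
by case=> Hz; rewrite /Defs.towards;
  [rewrite !(proj1 (Hpoles _)) ?vert_sigmaV | rewrite !(proj2 (Hpoles _)) ?vert_sigmaV].
Qed.

Section Vertex.

Variables (d : D) (k : nat).
Local Notation n := (fingraph.order sigma d).
Hypothesis Hk : 0 < k < n.
Hypothesis Hlab : forall i, i < n -> lab (iter i sigma d) = (i < k).

Lemma vert_iter_sigma i : vert (iter i sigma d) = vert d.
Proof. by elim: i => //= i IHi; rewrite vert_sigma. Qed.

Lemma vert_eq_iter_sigma z : vert z = vert d -> exists2 i, i < n & z = iter i sigma d.
Proof.
case: HQ => [[_ Hvert _ _] _] Hz.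
have Hdz : fconnect sigma d z by rewrite -Hvert Hz.
by exists (findex sigma d z); [apply: findex_max | rewrite iter_findex].
Qed.

Lemma towards_iter_sigma i : i < n -> towards (iter i sigma d) = (i != 0) && (i != k).
Proof.
rewrite /Defs.towards; case: i => [|i] Hi.
  have <- : iter n.-1 sigma d = (sigma^-1)%g d.
    apply: (@perm_inj _ sigma).
    by rewrite permKV -iterS prednK // iter_order //; apply: perm_inj.
  by rewrite -[d in lab d]/(iter 0 sigma d) !Hlab ?ltn_predL //; lia.
have -> : (sigma^-1)%g (iter i.+1 sigma d) = iter i sigma d by rewrite iterS permK.
by rewrite !Hlab ?(ltnW Hi) //; case: (ltngtP i.+1 k).
Qed.

Lemma ecolor_iter_sigma0 : ecolor d = black (vert d).
Proof.
have Hd : ~~ towards (iter 0 sigma d) by rewrite towards_iter_sigma //; lia.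
by rewrite (ecolor_outgoing Hd) /= -[d in lab d]/(iter 0 sigma d) Hlab //; lia.
Qed.

Lemma ecolor_iter_sigmak : ecolor (iter k sigma d) = ~~ black (vert d).
Proof.
have Hd : ~~ towards (iter k sigma d) by rewrite towards_iter_sigma ?eqxx ?andbF //; lia.
rewrite (ecolor_outgoing Hd) Hlab ?ltnn ?vert_iter_sigma; last lia.
by case: black.
Qed.

Lemma outgoing_at_vertex z :
  vert z = vert d -> ~~ towards z -> z = d \/ z = iter k sigma d.
Proof.
case/vert_eq_iter_sigma => i Hi ->.
by rewrite towards_iter_sigma // negb_and !negbK => /orP[] /eqP ->; [left | right].
Qed.

Lemma outgoing_ecolor_inj z z' : vert z = vert d -> vert z' = vert d ->
  ~~ towards z -> ~~ towards z' -> ecolor z = ecolor z' -> z = z'.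
Proof.
move=> Hz Hz' /(outgoing_at_vertex Hz) [] -> /(outgoing_at_vertex Hz') [] ->;
  rewrite ?ecolor_iter_sigma0 ?ecolor_iter_sigmak //; by case: black.
Qed.

Lemma next_outgoing_sigma j m : j < m <= n -> ~~ towards (iter m sigma d) ->
  (forall t, j < t < m -> t != k) ->
  next_outgoing sigma lab sigma (iter j sigma d) (iter m sigma d).
Proof.
move=> Hjm Hm Hnk; exists (m - j); split; first lia.
split; first by rewrite -iterD subnK //; lia.
split=> // t Ht; rewrite -iterD towards_iter_sigma; last lia.
by rewrite Hnk ?andbT; lia.
Qed.

Lemma next_outgoing_sigmaV j m : m < j <= n -> ~~ towards (iter m sigma d) ->
  (forall t, m < t < j -> t != k) ->
  next_outgoing sigma lab (sigma^-1)%g (iter j sigma d) (iter m sigma d).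
Proof.
move=> Hmj Hm Hnk; exists (j - m); split; first lia.
split; first by rewrite iter_permV_iter ?subKn //; lia.
split=> // t Ht; rewrite iter_permV_iter; last lia.
rewrite towards_iter_sigma; last lia.
by rewrite Hnk ?andbT; lia.
Qed.

Lemma next_outgoing_same_ecolor e : vert e = vert d -> towards e ->
  exists2 e', [/\ vert e' = vert d, ~~ towards e' & ecolor e' = ecolor e]
            & next_outgoing sigma lab (if black (vert d) then (sigma^-1)%g else sigma) e e'.
Proof.
case/vert_eq_iter_sigma => j Hj -> Hin.
have := Hin; rewrite towards_iter_sigma // => /andP[Hj0 Hjk].
have -> : ecolor (iter j sigma d) = (j < k) by rewrite /ecolor Hin Hlab.
have Hd : ~~ towards (iter 0 sigma d) by rewrite towards_iter_sigma //; lia.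
have Hdk : ~~ towards (iter k sigma d) by rewrite towards_iter_sigma ?eqxx ?andbF //; lia.
have Hdn : iter n sigma d = d by apply: iter_order; apply: perm_inj.
case: (ltnP j k) => Hj_k; case: ifP => Hb.
- exists d; first by rewrite ecolor_iter_sigma0 Hb.
  by apply: (next_outgoing_sigmaV (m := 0)) => //; lia.
- exists (iter k sigma d); first by rewrite vert_iter_sigma ecolor_iter_sigmak Hb.
  by apply: next_outgoing_sigma => //; lia.
- exists (iter k sigma d); first by rewrite vert_iter_sigma ecolor_iter_sigmak Hb.
  by apply: next_outgoing_sigmaV => //; lia.
- exists d; first by rewrite ecolor_iter_sigma0 Hb.
  by rewrite -{2}Hdn; apply: next_outgoing_sigma; rewrite ?Hdn //; lia.
Qed.

End Vertex.

End StrongLabeling.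

Unset Implicit Arguments.

Theorem lemma11 (D V : finType) (sigma alpha : {perm D}) (vert : D -> V)
    (black : V -> bool) (o : D) (s0 s1 : V) (lab : D -> bool)
    (HQ : quadrangulation sigma alpha vert)
    (Hcol : proper_coloring alpha vert black)
    (HL : strong_labeling sigma alpha vert black o s0 s1 lab)
    (v : V) (e : D) (He : vert e = v) (Hin : towards sigma lab e) :
  let r := if black v then (sigma^-1)%g else sigma in
  (forall e', vert e' = v -> ~~ towards sigma lab e' ->
     ecolor sigma alpha lab e' = ecolor sigma alpha lab e ->
     next_outgoing sigma lab r e e') /\
  (v != s0 -> v != s1 ->
     exists e', [/\ vert e' = v, ~~ towards sigma lab e' &
                    ecolor sigma alpha lab e' = ecolor sigma alpha lab e]).
Proof.
move=> r; have [Hpole | /norP[Hv0 Hv1]] := boolP ((v == s0) || (v == s1)).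
  split=> [e' He' | ]; last by case/orP: Hpole => /eqP ->; rewrite eqxx.
  move=> /negP[]; apply: (towards_at_poles HQ HL).
  by rewrite He'; case/orP: Hpole => /eqP; [left | right].
case: (HL) => [_ HG1 _ _ _]; have [d [Hd [k [Hk Hlab]]]] := HG1 v Hv0 Hv1.
have Hed : vert e = vert d by rewrite He Hd.
have [e1 [He1 Hout1 Hcol1] Hnext] := next_outgoing_same_ecolor HQ Hcol HL Hk Hlab Hed Hin.
rewrite /r -Hd; split=> [e' He' Hout Hcol' | _ _]; last by exists e1.
by rewrite (outgoing_ecolor_inj HQ Hcol HL Hk Hlab He' He1 Hout Hout1 (etrans Hcol' (esym Hcol1))).
Qed.
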